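(* Let $B_0,\ldots,B_N$, $T$, $\mathcal{F}$, $e$ be as in the context, let $\boldsymbol\lambda=(\lambda_1,\ldots,\lambda_m)$ be a stable non-resonant vector of eigenvalues with all $\lambda_i\ne0$, and let $C$ be a constant with $\|T(\boldsymbol\lambda^\alpha)^{-1}\|\le C|\boldsymbol\lambda^\alpha|^{-e}$ for all $|\alpha|\ge2$ (operator norm with respect to $\|\cdot\|_\infty$). Suppose $0<\mu\le\min\{|\lambda_1|^e,\ldots,|\lambda_m|^e\}$. Define $K$ on $H$ by $K\varphi=\sum_{|\alpha|\ge2}z^\alpha T(\boldsymbol\lambda^\alpha)^{-1}\varphi_\alpha$ for $\varphi=\sum_{|\alpha|\ge2}z^\alpha\varphi_\alpha$. Then $K$ is a bounded linear operator $H\to H(\mu)$ which inverts $D\Phi(0)$ (i.e. $\sum_{i=0}^NB_i(K\varphi)(\Lambda^iz)=\varphi(z)$ for $\|z\|_\infty\le\mu$, with $\Lambda=\mathrm{diag}(\lambda_1,\ldots,\lambda_m)$), and the composition $\Delta_\mu K:H\to H$ is bounded with $\|\Delta_\mu K\|\le C$.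
   Context: $T(\lambda)=\sum_{i=0}^N\lambda^iB_i$, $\mathcal{F}(\lambda)=\det T(\lambda)=\lambda^eg(\lambda)$ with $g(0)\neq0$ ($e$ maximal). A vector $\boldsymbol\lambda\in\mathbb{C}^m$ is a stable non-resonant vector of eigenvalues if $|\lambda_i|<1$, $\mathcal{F}(\lambda_i)=0$, and $\mathcal{F}(\boldsymbol\lambda^\alpha)\ne0$ for all $|\alpha|\ge2$; $\boldsymbol\lambda^\alpha=\prod\lambda_i^{\alpha_i}$. Sup norm $\|\cdot\|_\infty$ on $\mathbb{C}^s$. For $\mu>0$, $H(\mu)$ is the Banach space of functions $P(z)=\sum_{k\ge2}\sum_{|\alpha|=k}z^\alpha P_\alpha$ on $\{z\in\mathbb{C}^m:\|z\|_\infty\le\mu\}$ with values in $\mathbb{C}^d$ and norm $\|P\|_\mu=\sum_{k\ge2}\sum_{|\alpha|=k}\mu^k\|P_\alpha\|_\infty<\infty$; $H=H(1)$ with norm $\|\cdot\|_1$. $\Delta_\mu:H(\mu)\to H$ is $\Delta_\mu[\varphi](z)=\varphi(\mu z)$. $D\Phi(0)$ is the linear operator $\varphi\mapsto\sum_{i=0}^NB_i\,\varphi\circ\Lambda^i$. *)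

From Stdlib Require Import Reals Lra List Arith.
Import ListNotations.
Open Scope R_scope.

Record Cx := mkC { re : R; im : R }.
Definition C0 : Cx := mkC 0 0.
Definition C1 : Cx := mkC 1 0.
Definition Cadd (a b : Cx) : Cx := mkC (re a + re b) (im a + im b).
Definition Copp (a : Cx) : Cx := mkC (- re a) (- im a).
Definition Cmul (a b : Cx) : Cx :=
  mkC (re a * re b - im a * im b) (re a * im b + im a * re b).
Definition Cnorm (a : Cx) : R := sqrt (re a ^ 2 + im a ^ 2).
Fixpoint Cpow (a : Cx) (n : nat) : Cx :=
  match n with O => C1 | S n' => Cmul a (Cpow a n') end.
Definition Clsum (l : list Cx) : Cx := fold_right Cadd C0 l.
Definition Csum (n : nat) (f : nat -> Cx) : Cx := Clsum (map f (seq 0 n)).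
Definition Cinfinite_sum (s : nat -> Cx) (l : Cx) : Prop :=
  infinite_sum (fun k => re (s k)) (re l) /\ infinite_sum (fun k => im (s k)) (im l).
(* evaluation of the polynomial with coefficients g (lowest degree first) *)
Fixpoint peval (g : list Cx) (x : Cx) : Cx :=
  match g with nil => C0 | c :: g' => Cadd c (Cmul x (peval g' x)) end.

(* ---------- vectors in C^d and d x d matrices (entries with index < d) ---------- *)
Definition vec := nat -> Cx.
Definition mat := nat -> nat -> Cx.
Definition vnorm (d : nat) (v : vec) : R :=
  fold_right Rmax 0 (map (fun i => Cnorm (v i)) (seq 0 d)).
Definition mv (d : nat) (M : mat) (v : vec) : vec := fun i => Csum d (fun j => Cmul (M i j) (v j)).
Definition mm (d : nat) (M N : mat) : mat := fun i k => Csum d (fun j => Cmul (M i j) (N j k)).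
Definition idm : mat := fun i j => if Nat.eqb i j then C1 else C0.
Definition mat_eq (d : nat) (M N : mat) : Prop := forall i j, (i < d)%nat -> (j < d)%nat -> M i j = N i j.
Definition opnorm_le (d : nat) (M : mat) (c : R) : Prop :=
  forall v : vec, vnorm d (mv d M v) <= c * vnorm d v.
Definition minor0 (A : mat) (j : nat) : mat :=
  fun i k => A (S i) (if Nat.ltb k j then k else S k).
Fixpoint det (n : nat) (A : mat) : Cx :=
  match n with
  | O => C1
  | S n' => Csum n (fun j => Cmul (Cpow (Copp C1) j) (Cmul (A O j) (det n' (minor0 A j))))
  end.

Definition Tmat (N : nat) (B : nat -> mat) (l : Cx) : mat :=
  fun i j => Csum (S N) (fun k => Cmul (Cpow l k) (B k i j)).

(* all alpha in N^m (as lists of length m) with |alpha| = k *)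
Fixpoint mindices (m k : nat) : list (list nat) :=
  match m with
  | O => if Nat.eqb k 0 then [nil] else nil
  | S m' => flat_map (fun j => map (cons j) (mindices m' (k - j))) (seq 0 (S k))
  end.
Definition msize (al : list nat) : nat := fold_right Nat.add O al.
Definition mpow (x : list Cx) (al : list nat) : Cx :=
  fold_right Cmul C1 (map (fun p => Cpow (fst p) (snd p)) (combine x al)).

(* An element P of H(mu) is given by its coefficients P_alpha in C^d, alpha in N^m,
   |alpha| >= 2 (other coefficients are ignored). *)
Definition coeffs := list nat -> vec.
Definition normterm (d m : nat) (mu : R) (P : coeffs) (k : nat) : R :=
  if Nat.leb 2 k then
    mu ^ k * fold_right Rplus 0 (map (fun al => vnorm d (P al)) (mindices m k))
  else 0.
Definition Hnorm_is (d m : nat) (mu : R) (P : coeffs) (l : R) : Prop :=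
  infinite_sum (normterm d m mu P) l.
Definition inH (d m : nat) (mu : R) (P : coeffs) : Prop := exists l, Hnorm_is d m mu P l.
Definition Heval (d m : nat) (P : coeffs) (z : list Cx) (v : vec) : Prop :=
  forall i, (i < d)%nat ->
    Cinfinite_sum
      (fun k => if Nat.leb 2 k then
                  Clsum (map (fun al => Cmul (mpow z al) (P al i)) (mindices m k))
                else C0) (v i).
(* Delta_mu : (Delta_mu P)(z) = P(mu z), i.e. coefficients multiplied by mu^|alpha| *)
Definition DeltaMu (mu : R) (P : coeffs) : coeffs :=
  fun al i => Cmul (mkC (mu ^ msize al) 0) (P al i).
Definition Lampow (lam : list Cx) (i : nat) (z : list Cx) : list Cx :=
  map (fun p => Cmul (Cpow (fst p) i) (snd p)) (combine lam z).
(* the operator K, given the inverses Tinv x = T(x)^{-1} *)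
Definition Kop (d : nat) (lam : list Cx) (Tinv : Cx -> mat) (phi : coeffs) : coeffs :=
  fun al => if Nat.leb 2 (msize al) then mv d (Tinv (mpow lam al)) (phi al) else (fun _ => C0).

From Pilot Require Import Defs.
From Stdlib Require Import Reals List.
From Stdlib Require Import Lra Lia IndefiniteDescription.
Import ListNotations.
Open Scope R_scope.

(* The operator K acts diagonally on power series: the coefficient of z^α
   in Kφ is T(λ^α)^{-1} φ_α.  Both claims of the theorem are therefore
   proved degree by degree, one multi-index at a time, and then summed.

   From μ ≤ |λ_i|^e we get μ^|α| ≤ |λ^α|^e, so the hypothesis
     ‖T(λ^α)^{-1}‖ ≤ C |λ^α|^{-e} gives μ^|α| ‖T(λ^α)^{-1}φ_α‖ ≤ C ‖φ_α‖.
     Summing over |α| = k bounds the k-th term of ‖Kφ‖_μ by C times the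
     k-th term of ‖φ‖_1; comparison of nonnegative series yields
     ‖Kφ‖_μ ≤ C ‖φ‖_1, and ‖Δ_μ Kφ‖_1 = ‖Kφ‖_μ since Δ_μ multiplies the
     coefficient of z^α by μ^|α|.
   - Inversion.  Since (Λ^i z)^α = (λ^α)^i z^α, the degree-k part of
     Σ_i B_i (Kφ)(Λ^i z) is Σ_{|α|=k} z^α T(λ^α) T(λ^α)^{-1} φ_α, the
     degree-k part of φ(z).  All these series converge on the polydiscs
     involved (they are dominated by the norm series), so summing the
     degree-wise identity gives DΦ(0) K φ = φ. *)

Lemma Cext (a b : Cx) : re a = re b -> im a = im b -> a = b.
Proof. destruct a, b; simpl; intros; subst; reflexivity. Qed.

Definition Csub (a b : Cx) : Cx := Cadd a (Copp b).

Lemma Cx_ring_theory : ring_theory C0 Defs.C1 Cadd Cmul Csub Copp (@eq Cx).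
Proof.
  constructor; intros; apply Cext; unfold Csub, Cadd, Cmul, Copp, C0, Defs.C1; simpl; ring.
Qed.
Add Ring Cx_ring : Cx_ring_theory.

Lemma Clsum_ext {A} (l : list A) (f g : A -> Cx) :
  (forall x, In x l -> f x = g x) -> Clsum (map f l) = Clsum (map g l).
Proof.
  induction l as [|x l IH]; intro H; simpl; [reflexivity|].
  rewrite H, IH; simpl; auto.
  intros; apply H; simpl; auto.
Qed.

Lemma Clsum_add {A} (l : list A) (f g : A -> Cx) :
  Clsum (map (fun x => Cadd (f x) (g x)) l) = Cadd (Clsum (map f l)) (Clsum (map g l)).
Proof. induction l as [|x l IH]; simpl; [ring|]. rewrite IH; ring. Qed.

Lemma Clsum_scal {A} (l : list A) (f : A -> Cx) (c : Cx) :
  Clsum (map (fun x => Cmul c (f x)) l) = Cmul c (Clsum (map f l)).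
Proof. induction l as [|x l IH]; simpl; [ring|]. rewrite IH; ring. Qed.

Lemma Clsum_scal_r {A} (l : list A) (f : A -> Cx) (c : Cx) :
  Clsum (map (fun x => Cmul (f x) c) l) = Cmul (Clsum (map f l)) c.
Proof. induction l as [|x l IH]; simpl; [ring|]. rewrite IH; ring. Qed.

Lemma Clsum_zero {A} (l : list A) : Clsum (map (fun _ => C0) l) = C0.
Proof. induction l as [|x l IH]; simpl; [reflexivity|]. rewrite IH; ring. Qed.

Lemma Clsum_exch {A B} (l1 : list A) (l2 : list B) (f : A -> B -> Cx) :
  Clsum (map (fun x => Clsum (map (fun y => f x y) l2)) l1)
  = Clsum (map (fun y => Clsum (map (fun x => f x y) l1)) l2).
Proof.
  induction l1 as [|x l1 IH]; simpl.
  - symmetry; apply Clsum_zero.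
  - rewrite IH, <- Clsum_add. reflexivity.
Qed.

Lemma infinite_sum_ext (f g : nat -> R) (l : R) :
  (forall k, f k = g k) -> infinite_sum f l -> infinite_sum g l.
Proof.
  intros H Hf eps Heps. destruct (Hf eps Heps) as [n0 Hn0]. exists n0. intros n Hn.
  rewrite <- (sum_eq f g n) by auto. auto.
Qed.

Lemma infinite_sum_lin (f g : nat -> R) (a b x y : R) :
  infinite_sum f a -> infinite_sum g b ->
  infinite_sum (fun k => x * f k + y * g k) (x * a + y * b).
Proof.
  intros Hf Hg.
  assert (Hc : forall c : R, Un_cv (fun _ => c) c).
  { intros c eps Heps. exists O. intros n _. unfold Rdist. rewrite Rminus_diag, Rabs_R0. lra. }
  assert (Hlin : Un_cv (fun n => x * sum_f_R0 f n + y * sum_f_R0 g n) (x * a + y * b))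
    by (apply CV_plus; apply CV_mult; auto).
  intros eps Heps. destruct (Hlin eps Heps) as [n0 Hn0]. exists n0. intros n Hn.
  replace (sum_f_R0 (fun k => x * f k + y * g k) n)
    with (x * sum_f_R0 f n + y * sum_f_R0 g n); auto.
  rewrite plus_sum, !scal_sum. f_equal; apply sum_eq; intros; ring.
Qed.

Lemma infinite_sum_scal (f : nat -> R) (a c : R) :
  infinite_sum f a -> infinite_sum (fun k => c * f k) (c * a).
Proof.
  intro Hf. replace (c * a) with (c * a + 0 * a) by ring.
  eapply infinite_sum_ext; [|exact (infinite_sum_lin f f a a c 0 Hf Hf)]. intro; simpl; ring.
Qed.

Lemma infinite_sum_zero : infinite_sum (fun _ => 0) 0.
Proof.
  intros eps Heps. exists O. intros n _. unfold Rdist.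
  replace (sum_f_R0 (fun _ => 0) n) with 0.
  - rewrite Rminus_diag, Rabs_R0. lra.
  - induction n; simpl; [reflexivity| rewrite <- IHn; ring].
Qed.

Lemma infinite_sum_dominated (a b : nat -> R) (lb : R) :
  (forall k, Rabs (a k) <= b k) -> infinite_sum b lb -> exists l, infinite_sum a l.
Proof.
  intros H Hb.
  assert (X : {l | Un_cv (fun n => sum_f_R0 (fun i => Rabs (a i)) n) l}).
  { apply Rseries_CV_comp with b.
    - intro n; split; [apply Rabs_pos | apply H].
    - exists lb; exact Hb. }
  apply cv_cauchy_1, cauchy_abs, cv_cauchy_2 in X. destruct X as [l Hl]. exists l; exact Hl.
Qed.

Lemma infinite_sum_le (a b : nat -> R) (la lb : R) :
  (forall k, a k <= b k) -> infinite_sum a la -> infinite_sum b lb -> la <= lb.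
Proof.
  intros H Ha Hb. eapply Rle_cv_lim; [|exact Ha|exact Hb].
  intro n. apply sum_Rle. auto.
Qed.

Lemma infinite_sum_comparison (a b : nat -> R) (c lb : R) :
  (forall k, 0 <= a k) -> (forall k, 0 <= b k) -> (forall k, a k <= c * b k) ->
  infinite_sum b lb -> exists la, infinite_sum a la /\ la <= c * lb.
Proof.
  intros Ha Hb Hab Hlb.
  assert (Hdom : forall k, Rabs (a k) <= Rabs c * b k).
  { intro k. rewrite Rabs_pos_eq by auto.
    pose proof (Rmult_le_compat_r (b k) _ _ (Hb k) (Rle_abs c)). specialize (Hab k). lra. }
  destruct (infinite_sum_dominated a _ _ Hdom (infinite_sum_scal b lb (Rabs c) Hlb)) as [la Hla].
  exists la. split; [exact Hla|].
  exact (infinite_sum_le a _ la _ Hab Hla (infinite_sum_scal b lb c Hlb)).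
Qed.

Lemma Cinf_ext (s t : nat -> Cx) (l : Cx) :
  (forall k, s k = t k) -> Cinfinite_sum s l -> Cinfinite_sum t l.
Proof.
  intros H [H1 H2]. split; eapply infinite_sum_ext; eauto; intro k; simpl; rewrite H; reflexivity.
Qed.

Lemma Cinf_add (s t : nat -> Cx) (a b : Cx) :
  Cinfinite_sum s a -> Cinfinite_sum t b ->
  Cinfinite_sum (fun k => Cadd (s k) (t k)) (Cadd a b).
Proof.
  intros [H1 H2] [H3 H4]. split.
  - replace (re (Cadd a b)) with (1 * re a + 1 * re b) by (simpl; ring).
    eapply infinite_sum_ext; [|apply infinite_sum_lin; eauto]. intro k; simpl; ring.
  - replace (im (Cadd a b)) with (1 * im a + 1 * im b) by (simpl; ring).
    eapply infinite_sum_ext; [|apply infinite_sum_lin; eauto]. intro k; simpl; ring.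
Qed.

Lemma Cinf_scal (s : nat -> Cx) (a c : Cx) :
  Cinfinite_sum s a -> Cinfinite_sum (fun k => Cmul c (s k)) (Cmul c a).
Proof.
  intros [H1 H2]. split.
  - replace (re (Cmul c a)) with (re c * re a + (- im c) * im a) by (simpl; ring).
    eapply infinite_sum_ext; [|apply infinite_sum_lin; eauto]. intro k; simpl; ring.
  - replace (im (Cmul c a)) with (im c * re a + re c * im a) by (simpl; ring).
    eapply infinite_sum_ext; [|apply (infinite_sum_lin _ _ _ _ (im c) (re c) H1 H2)].
    intro k; simpl; ring.
Qed.

Lemma Cinf_uniq (s : nat -> Cx) (a b : Cx) :
  Cinfinite_sum s a -> Cinfinite_sum s b -> a = b.
Proof. intros [H1 H2] [H3 H4]. apply Cext; eapply uniqueness_sum; eauto. Qed.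

Lemma Cinf_lsum {A} (l : list A) (s : A -> nat -> Cx) (L : A -> Cx) :
  (forall x, In x l -> Cinfinite_sum (s x) (L x)) ->
  Cinfinite_sum (fun k => Clsum (map (fun x => s x k) l)) (Clsum (map L l)).
Proof.
  induction l as [|x l IH]; intro H; simpl.
  - split; apply infinite_sum_zero.
  - apply Cinf_add; [apply H; simpl; auto | apply IH; intros; apply H; simpl; auto].
Qed.

Lemma Cnorm_pos (a : Cx) : 0 <= Cnorm a.
Proof. apply sqrt_pos. Qed.

Lemma Cnorm_mul (a b : Cx) : Cnorm (Cmul a b) = Cnorm a * Cnorm b.
Proof. unfold Cnorm. rewrite <- sqrt_mult by nra. f_equal. simpl; ring. Qed.

Lemma Cnorm_real (r : R) : 0 <= r -> Cnorm (mkC r 0) = r.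
Proof.
  intro Hr. unfold Cnorm. simpl re; simpl im.
  replace (r ^ 2 + 0 ^ 2) with (r ^ 2) by ring. apply sqrt_pow2; exact Hr.
Qed.

Lemma Cnorm_C1 : Cnorm Defs.C1 = 1.
Proof. apply Cnorm_real; lra. Qed.

Lemma Cnorm_pow (a : Cx) (n : nat) : Cnorm (Cpow a n) = Cnorm a ^ n.
Proof.
  induction n; simpl.
  - apply Cnorm_C1.
  - rewrite Cnorm_mul, IHn; ring.
Qed.

Lemma re_le_Cnorm (a : Cx) : Rabs (re a) <= Cnorm a.
Proof. unfold Cnorm. rewrite <- sqrt_Rsqr_abs. apply sqrt_le_1_alt. unfold Rsqr. nra. Qed.

Lemma im_le_Cnorm (a : Cx) : Rabs (im a) <= Cnorm a.
Proof. unfold Cnorm. rewrite <- sqrt_Rsqr_abs. apply sqrt_le_1_alt. unfold Rsqr. nra. Qed.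

Definition rsum (l : list R) : R := fold_right Rplus 0 l.

Lemma rsum_pos {A} (l : list A) (f : A -> R) :
  (forall x, In x l -> 0 <= f x) -> 0 <= rsum (map f l).
Proof.
  induction l as [|x l IH]; intro H; simpl; [lra|].
  assert (0 <= f x) by (apply H; simpl; auto).
  assert (0 <= rsum (map f l)) by (apply IH; intros; apply H; simpl; auto).
  unfold rsum in *; lra.
Qed.

Lemma rsum_le {A} (l : list A) (f g : A -> R) :
  (forall x, In x l -> f x <= g x) -> rsum (map f l) <= rsum (map g l).
Proof.
  induction l as [|x l IH]; intro H; simpl; [lra|].
  assert (f x <= g x) by (apply H; simpl; auto).
  assert (rsum (map f l) <= rsum (map g l)) by (apply IH; intros; apply H; simpl; auto).
  unfold rsum in *; lra.
Qed.

Lemma rsum_scal {A} (l : list A) (f : A -> R) (c : R) :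
  rsum (map (fun x => c * f x) l) = c * rsum (map f l).
Proof. induction l as [|x l IH]; simpl; [ring|]. unfold rsum in *; rewrite IH; ring. Qed.

Lemma rsum_ext {A} (l : list A) (f g : A -> R) :
  (forall x, In x l -> f x = g x) -> rsum (map f l) = rsum (map g l).
Proof.
  induction l as [|x l IH]; intro H; simpl; [reflexivity|].
  unfold rsum in *. rewrite H, IH; simpl; auto. intros; apply H; simpl; auto.
Qed.

Lemma Clsum_components_le {A} (l : list A) (f : A -> Cx) :
  Rabs (re (Clsum (map f l))) <= rsum (map (fun x => Cnorm (f x)) l) /\
  Rabs (im (Clsum (map f l))) <= rsum (map (fun x => Cnorm (f x)) l).
Proof.
  induction l as [|x l [IHr IHi]]; simpl.
  - rewrite Rabs_R0; lra.
  - pose proof (re_le_Cnorm (f x)). pose proof (im_le_Cnorm (f x)).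
    pose proof (Rabs_triang (re (f x)) (re (Clsum (map f l)))).
    pose proof (Rabs_triang (im (f x)) (im (Clsum (map f l)))).
    unfold rsum in *; split; lra.
Qed.

Lemma fold_Rmax_pos (l : list R) : 0 <= fold_right Rmax 0 l.
Proof. induction l; simpl; [lra|]. eapply Rle_trans; [exact IHl| apply Rmax_r]. Qed.

Lemma fold_Rmax_ge (l : list R) (x : R) : In x l -> x <= fold_right Rmax 0 l.
Proof.
  induction l; simpl; [tauto|]. intros [->|H]; [apply Rmax_l|].
  eapply Rle_trans; [apply IHl; auto| apply Rmax_r].
Qed.

Lemma fold_Rmax_scal (l : list R) (r : R) :
  0 <= r -> fold_right Rmax 0 (map (fun x => r * x) l) = r * fold_right Rmax 0 l.
Proof. intro Hr. induction l; simpl; [ring|]. rewrite IHl, RmaxRmult; auto. Qed.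

Lemma vnorm_pos (d : nat) (v : vec) : 0 <= vnorm d v.
Proof. apply fold_Rmax_pos. Qed.

Lemma vnorm_ge (d : nat) (v : vec) (i : nat) : (i < d)%nat -> Cnorm (v i) <= vnorm d v.
Proof.
  intro. apply fold_Rmax_ge. apply (in_map (fun j => Cnorm (v j))). apply in_seq. lia.
Qed.

Lemma vnorm_scal (d : nat) (v : vec) (r : R) :
  0 <= r -> vnorm d (fun i => Cmul (mkC r 0) (v i)) = r * vnorm d v.
Proof.
  intro Hr. unfold vnorm. rewrite <- fold_Rmax_scal by auto. rewrite map_map. f_equal.
  apply map_ext. intro i. rewrite Cnorm_mul, Cnorm_real; auto.
Qed.

Lemma mindices_spec (m k : nat) (al : list nat) :
  In al (mindices m k) -> length al = m /\ msize al = k.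
Proof.
  revert k al. induction m as [|m IH]; intros k al H.
  - simpl in H. destruct (Nat.eqb_spec k 0); simpl in H; [|tauto].
    destruct H as [<-|[]]. simpl; auto.
  - change (In al (flat_map (fun j => map (cons j) (mindices m (k - j))) (seq 0 (S k)))) in H.
    apply in_flat_map in H. destruct H as [j [Hj H]].
    apply in_map_iff in H. destruct H as [al' [<- H]]. apply IH in H. apply in_seq in Hj.
    simpl. unfold msize in *; simpl. lia.
Qed.

Lemma Cpow_C1 (n : nat) : Cpow Defs.C1 n = Defs.C1.
Proof. induction n; simpl; [reflexivity|]. rewrite IHn; ring. Qed.

Lemma Cpow_add (a : Cx) (n p : nat) : Cpow a (n + p) = Cmul (Cpow a n) (Cpow a p).
Proof. induction n; simpl; [ring|]. rewrite IHn; ring. Qed.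

Lemma Cpow_mul (a b : Cx) (n : nat) : Cpow (Cmul a b) n = Cmul (Cpow a n) (Cpow b n).
Proof. induction n; simpl; [ring|]. rewrite IHn; ring. Qed.

Lemma Cpow_pow (a : Cx) (n p : nat) : Cpow (Cpow a n) p = Cpow a (n * p).
Proof.
  induction p; simpl.
  - rewrite Nat.mul_0_r; reflexivity.
  - rewrite IHp, <- Cpow_add. f_equal. lia.
Qed.

Lemma mpow_norm_le (al : list nat) (z : list Cx) (r : R) :
  length z = length al -> 0 <= r ->
  Forall (fun zi => Cnorm zi <= r) z -> Cnorm (mpow z al) <= r ^ msize al.
Proof.
  revert z. induction al as [|n al IH]; intros z Hl Hr Hz.
  - destruct z; simpl in Hl; [|discriminate]. unfold mpow; simpl.
    rewrite Cnorm_C1; lra.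
  - destruct z as [|a z]; simpl in Hl; [discriminate|]. inversion Hz; subst.
    unfold mpow; simpl. fold (mpow z al). unfold msize; simpl; fold (msize al).
    rewrite Cnorm_mul, Cnorm_pow, pow_add. apply Rmult_le_compat.
    + apply pow_le, Cnorm_pos.
    + apply Cnorm_pos.
    + apply pow_incr; split; auto. apply Cnorm_pos.
    + apply IH; auto.
Qed.

Lemma mpow_norm_ge (mu : R) (e : nat) (al : list nat) (lam : list Cx) :
  length lam = length al -> 0 <= mu ->
  Forall (fun l => mu <= Cnorm l ^ e) lam -> mu ^ msize al <= Cnorm (mpow lam al) ^ e.
Proof.
  revert lam. induction al as [|n al IH]; intros lam Hl Hr Hlam.
  - destruct lam; simpl in Hl; [|discriminate]. unfold mpow; simpl.
    rewrite Cnorm_C1, pow1; lra.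
  - destruct lam as [|a lam]; simpl in Hl; [discriminate|]. inversion Hlam; subst.
    unfold mpow; simpl. fold (mpow lam al). unfold msize; simpl; fold (msize al).
    rewrite Cnorm_mul, Cnorm_pow, pow_add, Rpow_mult_distr, <- pow_mult, Nat.mul_comm, pow_mult.
    apply Rmult_le_compat.
    + apply pow_le; auto.
    + apply pow_le; auto.
    + apply pow_incr; auto.
    + apply IH; auto.
Qed.

Lemma mpow_Lampow (al : list nat) (lam z : list Cx) (i : nat) :
  length lam = length al -> length z = length al ->
  mpow (Lampow lam i z) al = Cmul (Cpow (mpow lam al) i) (mpow z al).
Proof.
  revert lam z. induction al as [|n al IH]; intros lam z Hl Hz.
  - destruct lam, z; simpl in *; try discriminate.
    unfold mpow, Lampow; simpl. rewrite Cpow_C1; ring.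
  - destruct lam as [|a lam]; simpl in Hl; [discriminate|].
    destruct z as [|b z]; simpl in Hz; [discriminate|].
    unfold mpow, Lampow; simpl. fold (mpow lam al) (mpow z al) (Lampow lam i z).
    fold (mpow (Lampow lam i z) al).
    rewrite IH by lia. rewrite !Cpow_mul, !Cpow_pow, Nat.mul_comm. ring.
Qed.

Lemma Lampow_length (lam z : list Cx) (i : nat) :
  length (Lampow lam i z) = Nat.min (length lam) (length z).
Proof. unfold Lampow. rewrite length_map, length_combine. reflexivity. Qed.

Lemma Lampow_polydisc (lam z : list Cx) (i : nat) (mu : R) :
  Forall (fun l => Cnorm l < 1) lam -> Forall (fun zi => Cnorm zi <= mu) z ->
  Forall (fun x => Cnorm x <= mu) (Lampow lam i z).
Proof.
  revert z. induction lam as [|a lam IH]; intros z Hl Hz; [constructor|].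
  destruct z as [|b z]; [constructor|]. inversion Hl; inversion Hz; subst.
  unfold Lampow; simpl. constructor.
  - rewrite Cnorm_mul, Cnorm_pow. pose proof (Cnorm_pos a). pose proof (Cnorm_pos b).
    assert (Cnorm a ^ i <= 1) by (rewrite <- (pow1 i); apply pow_incr; lra). nra.
  - apply IH; auto.
Qed.

(* Since μ <= |λ_1|^e <= 1, the polydisc of radius μ lies in the unit one. *)
Lemma polydisc_in_unit (lam z : list Cx) (e : nat) (mu : R) :
  length z = length lam -> Forall (fun l => Cnorm l < 1) lam ->
  Forall (fun l => mu <= Cnorm l ^ e) lam ->
  Forall (fun zi => Cnorm zi <= mu) z -> Forall (fun zi => Cnorm zi <= 1) z.
Proof.
  intros Hlen Hlam Hmu Hz. destruct lam as [|a lam].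
  - destruct z; [constructor|discriminate].
  - apply Forall_inv in Hlam, Hmu. pose proof (Cnorm_pos a).
    assert (Cnorm a ^ e <= 1) by (rewrite <- (pow1 e); apply pow_incr; lra).
    eapply Forall_impl; [|exact Hz]. simpl; intros; lra.
Qed.

Lemma mv_ext_mat (d : nat) (M M' : mat) (v : vec) (j : nat) :
  mat_eq d M M' -> (j < d)%nat -> mv d M v j = mv d M' v j.
Proof.
  intros H Hj. unfold mv, Csum. apply Clsum_ext. intros x Hx. apply in_seq in Hx.
  rewrite H; auto; lia.
Qed.

Lemma mv_ext_vec (d : nat) (M : mat) (v v' : vec) (j : nat) :
  (forall j', v j' = v' j') -> mv d M v j = mv d M v' j.
Proof. intro H. unfold mv, Csum. apply Clsum_ext. intros x _. rewrite H; reflexivity. Qed.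

Lemma mv_zero (d : nat) (M : mat) (j : nat) : mv d M (fun _ => C0) j = C0.
Proof.
  unfold mv, Csum. transitivity (Clsum (map (fun _ : nat => C0) (seq 0 d))).
  - apply Clsum_ext; intros; ring.
  - apply Clsum_zero.
Qed.

Lemma mv_scal (d : nat) (M : mat) (c : Cx) (v : vec) (j : nat) :
  mv d M (fun j' => Cmul c (v j')) j = Cmul c (mv d M v j).
Proof. unfold mv, Csum. rewrite <- Clsum_scal. apply Clsum_ext; intros; ring. Qed.

Lemma mv_lsum {A} (d : nat) (M : mat) (l : list A) (f : A -> vec) (j : nat) :
  mv d M (fun j' => Clsum (map (fun x => f x j') l)) j = Clsum (map (fun x => mv d M (f x) j) l).
Proof.
  unfold mv, Csum. rewrite <- Clsum_exch. apply Clsum_ext; intros. symmetry. apply Clsum_scal.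
Qed.

Lemma mv_mm (d : nat) (M M' : mat) (v : vec) (j : nat) :
  mv d M (mv d M' v) j = mv d (mm d M M') v j.
Proof.
  transitivity (Clsum (map (fun j'' => mv d M (fun j' => Cmul (M' j' j'') (v j'')) j) (seq 0 d))).
  { apply (mv_lsum d M (seq 0 d) (fun j'' j' => Cmul (M' j' j'') (v j''))). }
  unfold mv, mm, Csum. apply Clsum_ext; intros. rewrite <- Clsum_scal_r.
  apply Clsum_ext; intros; ring.
Qed.

Lemma Clsum_idm_row (v : vec) (j : nat) (l : list nat) :
  NoDup l ->
  Clsum (map (fun j' => Cmul (idm j j') (v j')) l) = if in_dec Nat.eq_dec j l then v j else C0.
Proof.
  induction l as [|a l IH]; intro Hnd; [reflexivity|].
  inversion Hnd as [|? ? Ha Hnd']; subst.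
  change (Cadd (Cmul (idm j a) (v a)) (Clsum (map (fun j' => Cmul (idm j j') (v j')) l))
          = if in_dec Nat.eq_dec j (a :: l) then v j else C0).
  rewrite IH by exact Hnd'. unfold idm.
  destruct (in_dec Nat.eq_dec j (a :: l)) as [Hin|Hnin];
    destruct (in_dec Nat.eq_dec j l) as [Hl|Hl]; destruct (Nat.eqb_spec j a) as [->|Hja];
    simpl in *; try tauto; try ring.
  destruct Hin; [congruence|tauto].
Qed.

Lemma mv_idm (d : nat) (v : vec) (j : nat) : (j < d)%nat -> mv d idm v j = v j.
Proof.
  intro Hj. unfold mv, Csum. rewrite Clsum_idm_row by apply seq_NoDup.
  destruct (in_dec Nat.eq_dec j (seq 0 d)) as [|Hn]; [reflexivity|].
  exfalso; apply Hn, in_seq; lia.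
Qed.

Lemma Tmat_mv (d N : nat) (B : nat -> mat) (x : Cx) (v : vec) (j : nat) :
  Csum (S N) (fun i => Cmul (Cpow x i) (mv d (B i) v j)) = mv d (Tmat N B x) v j.
Proof.
  unfold mv at 2, Tmat, Csum.
  rewrite (Clsum_ext _ _ (fun i => Clsum (map (fun j' => Cmul (Cpow x i) (Cmul (B i j j') (v j'))) (seq 0 d))))
    by (intros; symmetry; apply Clsum_scal).
  rewrite Clsum_exch. apply Clsum_ext; intros j' _.
  rewrite <- Clsum_scal_r. apply Clsum_ext; intros; ring.
Qed.

(* The degree-k part of P(z), component i; P(z) = v means exactly that
   Σ_k hom_part m P z k i converges to v_i for every i < d. *)
Definition hom_part (m : nat) (P : coeffs) (z : list Cx) (k i : nat) : Cx :=
  if Nat.leb 2 k then Clsum (map (fun al => Cmul (mpow z al) (P al i)) (mindices m k)) else C0.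

Lemma normterm_pos (d m : nat) (r : R) (P : coeffs) (k : nat) :
  0 <= r -> 0 <= normterm d m r P k.
Proof.
  intro Hr. unfold normterm. destruct (Nat.leb 2 k); [|lra].
  apply Rmult_le_pos; [apply pow_le; exact Hr|].
  apply (rsum_pos _ (fun al => vnorm d (P al))). intros; apply vnorm_pos.
Qed.

Lemma hom_part_le_normterm (d m : nat) (r : R) (P : coeffs) (z : list Cx) (k i : nat) :
  (i < d)%nat -> 0 <= r -> length z = m -> Forall (fun zi => Cnorm zi <= r) z ->
  Rabs (re (hom_part m P z k i)) <= normterm d m r P k /\
  Rabs (im (hom_part m P z k i)) <= normterm d m r P k.
Proof.
  intros Hi Hr Hz Hzr. unfold hom_part, normterm. destruct (Nat.leb_spec 2 k) as [Hk|Hk].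
  2:{ simpl. rewrite Rabs_R0. lra. }
  assert (Hsum : rsum (map (fun al => Cnorm (Cmul (mpow z al) (P al i))) (mindices m k))
                 <= r ^ k * rsum (map (fun al => vnorm d (P al)) (mindices m k))).
  { rewrite <- rsum_scal. apply rsum_le. intros al Hal.
    destruct (mindices_spec m k al Hal) as [Hla Hsa].
    rewrite Cnorm_mul, <- Hsa. apply Rmult_le_compat; try apply Cnorm_pos.
    - apply mpow_norm_le; [lia|exact Hr|exact Hzr].
    - apply vnorm_ge; exact Hi. }
  destruct (Clsum_components_le (mindices m k) (fun al => Cmul (mpow z al) (P al i))).
  unfold rsum in *. split; lra.
Qed.

Lemma Heval_exists (d m : nat) (r : R) (P : coeffs) (l : R) (z : list Cx) :
  0 <= r -> Hnorm_is d m r P l -> length z = m -> Forall (fun zi => Cnorm zi <= r) z ->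
  exists v, Heval d m P z v.
Proof.
  intros Hr Hl Hz Hzr.
  assert (Hcomp : forall i, exists x, (i < d)%nat -> Cinfinite_sum (fun k => hom_part m P z k i) x).
  { intro i. destruct (Nat.lt_ge_cases i d) as [Hi|Hi]; [|exists C0; intro; lia].
    pose proof (fun k => hom_part_le_normterm d m r P z k i Hi Hr Hz Hzr) as Hb.
    destruct (infinite_sum_dominated _ _ _ (fun k => proj1 (Hb k)) Hl) as [a Ha].
    destruct (infinite_sum_dominated _ _ _ (fun k => proj2 (Hb k)) Hl) as [b Hb'].
    exists (mkC a b). intros _. split; assumption. }
  destruct (functional_choice _ Hcomp) as [v Hv]. exists v. exact Hv.
Qed.

Lemma Cinf_mv_combination (d n : nat) (M : nat -> mat) (s : nat -> nat -> vec)
  (w : nat -> vec) (j : nat) :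
  (forall i j', (i < n)%nat -> (j' < d)%nat -> Cinfinite_sum (fun k => s i k j') (w i j')) ->
  Cinfinite_sum (fun k => Csum n (fun i => mv d (M i) (s i k) j))
                (Csum n (fun i => mv d (M i) (w i) j)).
Proof.
  intro Hs. apply (Cinf_lsum (seq 0 n) (fun i k => mv d (M i) (s i k) j)).
  intros i Hi. apply in_seq in Hi.
  apply (Cinf_lsum (seq 0 d) (fun j' k => Cmul (M i j j') (s i k j'))).
  intros j' Hj'. apply in_seq in Hj'. apply Cinf_scal, Hs; lia.
Qed.

Lemma Kop_linear (d : nat) (lam : list Cx) (Tinv : Cx -> mat)
  (a : Cx) (phi psi : coeffs) (al : list nat) (i : nat) :
  Kop d lam Tinv (fun be j => Cadd (phi be j) (Cmul a (psi be j))) al i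
  = Cadd (Kop d lam Tinv phi al i) (Cmul a (Kop d lam Tinv psi al i)).
Proof.
  unfold Kop. destruct (Nat.leb 2 (msize al)); [|apply Cext; simpl; ring].
  unfold mv, Csum. rewrite <- Clsum_scal, <- Clsum_add. apply Clsum_ext; intros; ring.
Qed.

(* If ‖T^{-1} v‖ <= (C / X) ‖v‖ and 0 < q <= X, then q ‖T^{-1} v‖ <= C ‖v‖
   (with no sign assumption on C). *)
Lemma weighted_inverse_bound (q X a b C : R) :
  0 < q -> q <= X -> 0 <= a -> 0 <= b -> a <= C * / X * b -> q * a <= C * b.
Proof.
  intros Hq HqX Ha Hb H.
  assert (Hy : 0 < / X) by (apply Rinv_0_lt_compat; lra).
  assert (Hqy : q * / X <= 1).
  { apply (Rmult_le_reg_r X); [lra|]. rewrite Rmult_assoc, Rinv_l by lra. lra. }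
  assert (q * a <= (q * / X) * (C * b)).
  { replace ((q * / X) * (C * b)) with (q * (C * / X * b)) by ring.
    apply Rmult_le_compat_l; lra. }
  destruct (Rle_dec 0 (C * b)) as [Hcb|Hcb].
  - assert (0 <= (1 - q * / X) * (C * b)) by (apply Rmult_le_pos; lra). lra.
  - assert (0 < / X * - (C * b)) by (apply Rmult_lt_0_compat; lra).
    assert (C * / X * b = / X * (C * b)) by ring. lra.
Qed.

Lemma normterm_Kop_le (d m e : nat) (lam : list Cx) (Tinv : Cx -> mat) (C mu : R)
  (phi : coeffs) (k : nat) :
  length lam = m -> 0 < mu -> Forall (fun l => mu <= Cnorm l ^ e) lam ->
  (forall k al, (2 <= k)%nat -> In al (mindices m k) ->
      opnorm_le d (Tinv (mpow lam al)) (C * / (Cnorm (mpow lam al) ^ e))) ->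
  normterm d m mu (Kop d lam Tinv phi) k <= C * normterm d m 1 phi k.
Proof.
  intros Hl Hmu Hlam HC. unfold normterm. destruct (Nat.leb_spec 2 k) as [Hk|Hk]; [|lra].
  change (mu ^ k * rsum (map (fun al => vnorm d (Kop d lam Tinv phi al)) (mindices m k)) <=
          C * (1 ^ k * rsum (map (fun al => vnorm d (phi al)) (mindices m k)))).
  rewrite pow1, Rmult_1_l, <- !rsum_scal. apply rsum_le. intros al Hal.
  destruct (mindices_spec m k al Hal) as [Hla Hs].
  unfold Kop. rewrite Hs. destruct (Nat.leb_spec 2 k); [|lia].
  apply (weighted_inverse_bound _ (Cnorm (mpow lam al) ^ e)).
  - apply pow_lt; exact Hmu.
  - rewrite <- Hs. apply mpow_norm_ge; [lia|lra|exact Hlam].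
  - apply vnorm_pos.
  - apply vnorm_pos.
  - apply (HC k al); assumption.
Qed.

Lemma Kop_bounded (d m e : nat) (lam : list Cx) (Tinv : Cx -> mat) (C mu : R)
  (phi : coeffs) (l : R) :
  length lam = m -> 0 < mu -> Forall (fun x => mu <= Cnorm x ^ e) lam ->
  (forall k al, (2 <= k)%nat -> In al (mindices m k) ->
      opnorm_le d (Tinv (mpow lam al)) (C * / (Cnorm (mpow lam al) ^ e))) ->
  Hnorm_is d m 1 phi l -> exists l', Hnorm_is d m mu (Kop d lam Tinv phi) l' /\ l' <= C * l.
Proof.
  intros Hl Hmu Hlam HC Hphi.
  apply (infinite_sum_comparison _ (normterm d m 1 phi)); [| |intro k|exact Hphi].
  - intro k. apply normterm_pos; lra.
  - intro k. apply normterm_pos; lra.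
  - apply (normterm_Kop_le d m e lam); assumption.
Qed.

Lemma Hnorm_DeltaMu (d m : nat) (mu : R) (P : coeffs) (l : R) :
  0 <= mu -> Hnorm_is d m mu P l -> Hnorm_is d m 1 (DeltaMu mu P) l.
Proof.
  intros Hmu HP. eapply infinite_sum_ext; [|exact HP]. intro k. unfold normterm.
  destruct (Nat.leb 2 k); [|reflexivity].
  rewrite pow1, Rmult_1_l.
  change (mu ^ k * rsum (map (fun al => vnorm d (P al)) (mindices m k)) =
          rsum (map (fun al => vnorm d (DeltaMu mu P al)) (mindices m k))).
  rewrite <- rsum_scal. apply rsum_ext. intros al Hal.
  destruct (mindices_spec m k al Hal) as [_ Hs]. unfold DeltaMu.
  rewrite vnorm_scal, Hs; [reflexivity|]. apply pow_le; exact Hmu.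
Qed.

Lemma hom_part_Kop_Lampow (d m : nat) (lam : list Cx) (Tinv : Cx -> mat) (phi : coeffs)
  (z : list Cx) (i k j : nat) :
  length lam = m -> length z = m -> (2 <= k)%nat ->
  hom_part m (Kop d lam Tinv phi) (Lampow lam i z) k j
  = Clsum (map (fun al => Cmul (Cmul (mpow z al) (Cpow (mpow lam al) i))
                               (mv d (Tinv (mpow lam al)) (phi al) j)) (mindices m k)).
Proof.
  intros Hlam Hz Hk. unfold hom_part. destruct (Nat.leb_spec 2 k); [|lia].
  apply Clsum_ext. intros al Hal. destruct (mindices_spec m k al Hal) as [Hla Hsa].
  unfold Kop. rewrite Hsa, mpow_Lampow by lia. destruct (Nat.leb_spec 2 k); [ring|lia].
Qed.

(* Degree-wise inversion: Σ_i B_i [(Kφ)(Λ^i z)]_k = [φ(z)]_k, because the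
   degree-k part of the left side is Σ_{|α|=k} z^α T(λ^α) T(λ^α)^{-1} φ_α. *)
Lemma DPhi_Kop_hom_part (d m N : nat) (B : nat -> mat) (lam : list Cx) (Tinv : Cx -> mat)
  (phi : coeffs) (z : list Cx) (k j : nat) :
  length lam = m -> length z = m -> (j < d)%nat ->
  (forall al, (2 <= k)%nat -> In al (mindices m k) ->
     mat_eq d (mm d (Tmat N B (mpow lam al)) (Tinv (mpow lam al))) idm) ->
  Csum (S N) (fun i => mv d (B i) (fun j' => hom_part m (Kop d lam Tinv phi) (Lampow lam i z) k j') j)
  = hom_part m phi z k j.
Proof.
  intros Hlam Hz Hj Hinv. unfold hom_part at 2. destruct (Nat.leb_spec 2 k) as [Hk|Hk].
  - set (Ls := mindices m k).
    set (u := fun al => mv d (Tinv (mpow lam al)) (phi al)).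
    transitivity (Clsum (map (fun al => Cmul (mpow z al)
        (Csum (S N) (fun i => Cmul (Cpow (mpow lam al) i) (mv d (B i) (u al) j)))) Ls)).
    + unfold Csum at 1. rewrite (Clsum_ext _ _ (fun i => Clsum (map (fun al =>
          Cmul (mpow z al) (Cmul (Cpow (mpow lam al) i) (mv d (B i) (u al) j))) Ls))).
      * rewrite Clsum_exch. apply Clsum_ext; intros al _. unfold Csum. apply Clsum_scal.
      * intros i _.
        rewrite (mv_ext_vec d (B i) _ (fun j' => Clsum (map (fun al =>
            Cmul (Cmul (mpow z al) (Cpow (mpow lam al) i)) (u al j')) Ls)))
          by (intro j'; apply hom_part_Kop_Lampow; assumption).
        rewrite (mv_lsum d (B i) Ls (fun al j' => Cmul (Cmul (mpow z al) (Cpow (mpow lam al) i)) (u al j'))).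
        apply Clsum_ext; intros al _. rewrite mv_scal. ring.
    + apply Clsum_ext; intros al Hal. f_equal. unfold u.
      rewrite Tmat_mv, mv_mm, (mv_ext_mat d _ idm _ _ (Hinv al Hk Hal) Hj).
      apply mv_idm; exact Hj.
  - transitivity (Csum (S N) (fun i => mv d (B i) (fun _ => C0) j)).
    + unfold Csum. apply Clsum_ext; intros i _. apply mv_ext_vec. intro j'.
      unfold hom_part. destruct (Nat.leb_spec 2 k); [lia|reflexivity].
    + unfold Csum. rewrite (Clsum_ext _ _ (fun _ => C0)) by (intros; apply mv_zero).
      apply Clsum_zero.
Qed.

Lemma DPhi_Kop_inverts (d m N : nat) (B : nat -> mat) (lam : list Cx) (Tinv : Cx -> mat)
  (phi : coeffs) (z : list Cx) (w : nat -> vec) (v : vec) (j : nat) :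
  length lam = m -> length z = m -> (j < d)%nat ->
  (forall k al, (2 <= k)%nat -> In al (mindices m k) ->
     mat_eq d (mm d (Tmat N B (mpow lam al)) (Tinv (mpow lam al))) idm) ->
  (forall i, (i <= N)%nat -> Heval d m (Kop d lam Tinv phi) (Lampow lam i z) (w i)) ->
  Heval d m phi z v ->
  Csum (S N) (fun i => mv d (B i) (w i) j) = v j.
Proof.
  intros Hlam Hz Hj Hinv Hw Hv.
  apply (Cinf_uniq (fun k => Csum (S N) (fun i =>
           mv d (B i) (fun j' => hom_part m (Kop d lam Tinv phi) (Lampow lam i z) k j') j))).
  - apply Cinf_mv_combination. intros i j' Hi Hj'. apply Hw; [lia|exact Hj'].
  - eapply Cinf_ext; [|exact (Hv j Hj)]. intro k. symmetry.
    apply DPhi_Kop_hom_part; auto. intros al Hk Hal. exact (Hinv k al Hk Hal).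
Qed.

Theorem mainTheorem11
  (d m N : nat) (B : nat -> mat)
  (e : nat) (g : list Cx)
  (hg0 : peval g C0 <> C0)
  (hF : forall l : Cx, det d (Tmat N B l) = Cmul (Cpow l e) (peval g l))
  (lam : list Cx) (hlen : length lam = m)
  (hstable : Forall (fun l => Cnorm l < 1 /\ det d (Tmat N B l) = C0 /\ l <> C0) lam)
  (hnonres : forall k al, (2 <= k)%nat -> In al (mindices m k) ->
               det d (Tmat N B (mpow lam al)) <> C0)
  (Tinv : Cx -> mat)
  (hTinv : forall k al, (2 <= k)%nat -> In al (mindices m k) ->
      mat_eq d (mm d (Tmat N B (mpow lam al)) (Tinv (mpow lam al))) idm /\
      mat_eq d (mm d (Tinv (mpow lam al)) (Tmat N B (mpow lam al))) idm)
  (C : R)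
  (hC : forall k al, (2 <= k)%nat -> In al (mindices m k) ->
      opnorm_le d (Tinv (mpow lam al)) (C * / (Cnorm (mpow lam al) ^ e)))
  (mu : R) (hmu0 : 0 < mu) (hmu : Forall (fun l => mu <= Cnorm l ^ e) lam) :
  let K := Kop d lam Tinv in
  (* K is linear *)
  (forall (a : Cx) (phi psi : coeffs) al i,
      K (fun be j => Cadd (phi be j) (Cmul a (psi be j))) al i
      = Cadd (K phi al i) (Cmul a (K psi al i))) /\
  (* K maps H into H(mu) and inverts DPhi(0) *)
  (forall phi : coeffs, inH d m 1 phi ->
      inH d m mu (K phi) /\
      forall z : list Cx, length z = m -> Forall (fun zi => Cnorm zi <= mu) z ->
        exists (w : nat -> vec) (v : vec),
          (forall i, (i <= N)%nat -> Heval d m (K phi) (Lampow lam i z) (w i)) /\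
          Heval d m phi z v /\
          forall j, (j < d)%nat ->
            Csum (S N) (fun i => mv d (B i) (w i) j) = v j) /\
  (* K : H -> H(mu) is bounded *)
  (exists c : R, forall (phi : coeffs) (l : R), Hnorm_is d m 1 phi l ->
      exists l', Hnorm_is d m mu (K phi) l' /\ l' <= c * l) /\
  (* Delta_mu K : H -> H is bounded with norm <= C *)
  (forall (phi : coeffs) (l : R), Hnorm_is d m 1 phi l ->
      exists l', Hnorm_is d m 1 (DeltaMu mu (K phi)) l' /\ l' <= C * l).
Proof.
  intros K.
  assert (Hunit : Forall (fun l => Cnorm l < 1) lam)
    by (eapply Forall_impl; [|exact hstable]; simpl; tauto).
  assert (HK : forall phi l, Hnorm_is d m 1 phi l ->
                 exists l', Hnorm_is d m mu (K phi) l' /\ l' <= C * l)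
    by (intros; eapply Kop_bounded; eauto).
  split; [intros; apply Kop_linear|]. split; [|split; [exists C; exact HK|]].
  - intros phi [l Hl]. destruct (HK phi l Hl) as [l1 [Hl1 _]].
    split; [exists l1; exact Hl1|]. intros z Hz Hzmu.
    assert (Hz1 : Forall (fun zi => Cnorm zi <= 1) z)
      by (apply (polydisc_in_unit lam z e mu); [congruence|assumption..]).
    destruct (Heval_exists d m 1 phi l z) as [v Hv]; [lra|exact Hl|exact Hz|exact Hz1|].
    destruct (functional_choice (fun i w => Heval d m (K phi) (Lampow lam i z) w)) as [w Hw].
    { intro i. apply (Heval_exists d m mu _ l1); [lra|exact Hl1| |].
      - rewrite Lampow_length. lia.
      - apply Lampow_polydisc; assumption. }
    exists w, v. split; [intros i _; apply Hw|]. split; [exact Hv|].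
    intros j Hj. apply (DPhi_Kop_inverts d m N B lam Tinv phi z); auto.
    intros k al Hk Hal. exact (proj1 (hTinv k al Hk Hal)).
  - intros phi l Hl. destruct (HK phi l Hl) as [l' [Hl' Hle]].
    exists l'. split; [apply Hnorm_DeltaMu; [lra|exact Hl']|exact Hle].
Qed.
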